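(* Let $N\in\mathbb{N}$, $R\ge 2$, $k\ge 2$, and let $p=\lfloor N/(2R^{2k})\rfloor$. Let $\mathcal{T}$ be a transformer model class in which a model is specified by $W$ bits of internal parameters (self-attention and MLP weights), a $D$-bit embedding for each of the $N$ subject tokens, and a $D$-bit embedding for each of the $R$ relation tokens, and whose output is a deterministic function of these bits and the input. Suppose $\mathcal{T}$ solves the $k$-hop factual recall task with zero error without Chain-of-Thought, i.e. for every choice of bijections $g_1,\dots,g_R:[N]\to[N]$ there is a setting of these bits under which, for every input $(s_0,r_1,\dots,r_k)\in[N]\times[R]^k$, the model directly outputs $(g_{r_k}\circ\cdots\circ g_{r_1})(s_0)$. Then \[ W \ge \max\{\mathcal{B}_{global},\ \mathcal{B}_{local}\} - R\cdot D, \] where \[ \mathcal{B}_{global} = (R-1)N\log_2\!\left(\frac{N}{e}\right) - N\cdot D,\qquad \mathcal{B}_{local} = p\Big[R^k(\log_2 N - 1) - D\Big]. \]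
   Context: Write $[N]=\{1,\dots,N\}$. In the $k$-hop factual recall task there are subjects $[N]$ and relations $[R]$, each relation $r$ having a bijection $g_r:[N]\to[N]$; the input is a sequence $(s_0,r_1,\dots,r_k)$ and the correct answer is $y=(g_{r_k}\circ\cdots\circ g_{r_1})(s_0)\in[N]$. ''Without Chain-of-Thought'' means the answer is produced directly as the next token after the input, without generating intermediate tokens. *)

From mathcomp Require Import all_boot.
From Stdlib Require Import Reals.
Set Implicit Arguments. Unset Strict Implicit. Unset Printing Implicit Defensive.

Notation bits n := (n.-tuple bool).

(* k-hop answer: (g_{r_k} o ... o g_{r_1}) s0, with subjects 'I_N = [N]
   and relations 'I_NR = [R] (0-indexed). *)
Definition khop (N NR k : nat) (g : 'I_NR -> 'I_N -> 'I_N)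
    (s0 : 'I_N) (rs : k.-tuple 'I_NR) : 'I_N :=
  foldl (fun s r => g r s) s0 rs.

(* A transformer model class: a fixed deterministic map which, given
   the W bits of internal parameters (attention/MLP weights), the D-bit
   embedding of the input subject token s0, the D-bit embeddings of the
   relation tokens, and the input (s0, r_1, ..., r_k) itself, produces
   the next token (an element of [N]). *)
Definition model_class (N NR k W D : nat) : Type :=
  bits W -> bits D -> {ffun 'I_NR -> bits D} -> 'I_N -> k.-tuple 'I_NR -> 'I_N.

Definition model_out (N NR k W D : nat) (F : model_class N NR k W D)
    (theta : bits W) (Es : {ffun 'I_N -> bits D}) (Er : {ffun 'I_NR -> bits D})
    (s0 : 'I_N) (rs : k.-tuple 'I_NR) : 'I_N :=
  F theta (Es s0) Er s0 rs.

Definition solves_khop (N NR k W D : nat) (F : model_class N NR k W D) : Prop :=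
  forall g : 'I_NR -> 'I_N -> 'I_N, (forall r, bijective (g r)) ->
  exists (theta : bits W) (Es : {ffun 'I_N -> bits D}) (Er : {ffun 'I_NR -> bits D}),
    forall (s0 : 'I_N) (rs : k.-tuple 'I_NR),
      model_out F theta Es Er s0 rs = khop g s0 rs.

Definition log2 (x : R) : R := (ln x / ln 2)%R.

Definition B_global (N NR D : nat) : R :=
  ((INR NR - 1) * INR N * log2 (INR N / exp 1) - INR N * INR D)%R.

Definition p_local (N NR k : nat) : nat := N %/ (2 * NR ^ (2 * k)).

Definition B_local (N NR k D : nat) : R :=
  (INR (p_local N NR k) * (INR NR ^ k * (log2 (INR N) - 1) - INR D))%R.

(* A counting argument.  A model of the class maps its bits to an
   input-output table; since every table of a family of bijections is
   produced by some setting of the bits, the number of such tables on any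
   set of inputs is at most 2^(W + D * #embeddings involved), where the R
   relation embeddings account for the term R D.

   Global bound: with g_0 = id, the outputs on the inputs (s, i, 0, ..., 0)
   recover g_1, ..., g_(R-1), so there are (N!)^(R-1) >= (N/e)^(N(R-1))
   tables, and N subject embeddings are involved.

   Local bound: plant p disjoint R-ary trees of depth k-1 in [N], rooted at
   p subjects; every relation moves down the trees, and on the leaves it is
   an arbitrary injection into the subjects not used by the trees.  On the
   inputs starting at a root only the p root embeddings matter, while the
   choice of p leaves at least N/2 free targets, giving at least
   (N/2)^(p R^k) tables.  The partial injections so described extend to
   bijections of [N] by composing transpositions. *)

From mathcomp Require Import all_boot fingroup perm zify.
From Stdlib Require Import Reals Lra.
(* Importing Reals rebinds [^] in nat_scope to [Nat.pow]; restore [expn]. *)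
From mathcomp Require Import ssrnat.
Set Implicit Arguments. Unset Strict Implicit. Unset Printing Implicit Defensive.

Lemma expn_sub_le_ffact n m : (n - m) ^ m <= n ^_ m.
Proof.
elim: m n => [|m IH] n //; rewrite ffactnS expnS.
by rewrite (_ : n - m.+1 = n.-1 - m) ?leq_mul ?IH //; lia.
Qed.

Section RealBounds.
Local Open Scope R_scope.

Lemma INR_addn (a b : nat) : INR (a + b)%N = INR a + INR b.
Proof. exact: plus_INR. Qed.

Lemma INR_muln (a b : nat) : INR (a * b)%N = INR a * INR b.
Proof. exact: mult_INR. Qed.

Lemma INR_expn (a b : nat) : INR (a ^ b)%N = INR a ^ b.
Proof. by elim: b => [|b IH] //; rewrite expnS INR_muln IH. Qed.

Lemma INR_leq (a b : nat) : (a <= b)%N -> INR a <= INR b.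
Proof. by move/leP; apply: le_INR. Qed.

Lemma pow_1_add_le_exp (x : R) (n : nat) : -1 <= x -> (1 + x) ^ n <= exp (INR n * x).
Proof.
move=> x_ge; elim: n => [|n IH]; first by rewrite Rmult_0_l exp_0 /=; lra.
rewrite [_ ^ n.+1]/= S_INR (Rmult_plus_distr_r (INR n)) Rmult_1_l exp_plus Rmult_comm.
apply: Rmult_le_compat; [apply: pow_le; lra | lra | exact: IH | exact: exp_ineq1_le].
Qed.

Lemma pow_succ_le_exp (n : nat) : INR n.+1 ^ n <= exp 1 * INR n ^ n.
Proof.
case: n => [|n]; first by have := exp_ineq1_le 1; rewrite /=; lra.
set m := INR n.+1.
have m_gt0 : 0 < m by apply: lt_0_INR; lia.
have -> : INR n.+2 = m * (1 + / m) by rewrite S_INR -/m; field; lra.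
rewrite Rpow_mult_distr Rmult_comm.
apply: Rmult_le_compat_r; first by apply: pow_le; lra.
have inv_ge : -1 <= / m by have := Rinv_0_lt_compat m m_gt0; lra.
by have := pow_1_add_le_exp n.+1 inv_ge; rewrite -/m Rinv_r //; lra.
Qed.

Lemma pow_div_e_le_fact (n : nat) : (INR n / exp 1) ^ n <= INR n`!.
Proof.
set E := exp 1; have E_gt0 : 0 < E := exp_pos 1.
elim: n => [|n IH]; first by rewrite /=; lra.
rewrite factS INR_muln; set a := INR n.+1.
have a_ge0 : 0 <= a := pos_INR n.+1.
have invEn_gt0 : 0 < / E ^ n := Rinv_0_lt_compat _ (pow_lt _ n E_gt0).
rewrite /Rdiv Rpow_mult_distr pow_inv in IH.
have le_an : a ^ n * / E ^ n <= E * INR n`!.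
  have := Rmult_le_compat_r _ _ _ (Rlt_le _ _ invEn_gt0) (pow_succ_le_exp n).
  have := Rmult_le_compat_l E _ _ (Rlt_le _ _ E_gt0) IH.
  rewrite -/a -/E; lra.
rewrite -[(a / E) ^ n.+1]/(a / E * (a / E) ^ n) /Rdiv Rpow_mult_distr pow_inv.
have invE_gt0 := Rinv_0_lt_compat E E_gt0.
rewrite (_ : a * INR n`! = a * / E * (E * INR n`!)); last by field; lra.
by apply: Rmult_le_compat_l => //; nra.
Qed.

Lemma le_log2_of_pow_le (x : R) (e n : nat) :
  0 < x -> x ^ e <= 2 ^ n -> INR e * log2 x <= INR n.
Proof.
move=> x_gt0 le_pow.
have ln2_gt0 : 0 < ln 2 by have := ln_lt_2; lra.
have : ln (x ^ e) <= ln (2 ^ n).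
  case: (Rle_lt_or_eq _ _ le_pow) => [lt_pow | ->]; last exact: Rle_refl.
  by apply/Rlt_le/ln_increasing => //; apply: pow_lt.
rewrite !ln_pow; try lra.
rewrite /log2 => le_ln; apply: (Rmult_le_reg_r (ln 2)) => //.
by rewrite Rmult_assoc /Rdiv Rmult_assoc Rinv_l; lra.
Qed.

Lemma log2_half (x : R) : 0 < x -> log2 (x / 2) = log2 x - 1.
Proof.
move=> x_gt0; have ln2_gt0 : 0 < ln 2 by have := ln_lt_2; lra.
by rewrite /log2 /Rdiv ln_mult ?ln_Rinv; try lra; field; lra.
Qed.

Lemma le_log2_of_expn_le (x : R) (a m e n : nat) :
  0 < x -> x ^ m <= INR a -> (a ^ e <= 2 ^ n)%N -> INR (m * e) * log2 x <= INR n.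
Proof.
move=> x_gt0 x_le a_le; apply: le_log2_of_pow_le => //.
rewrite pow_mult; apply: Rle_trans (_ : INR a ^ e <= _).
  by apply: pow_incr; split => //; apply: pow_le; lra.
by have := INR_leq a_le; rewrite !INR_expn.
Qed.

Lemma half_pow_le_ffact (N T m : nat) :
  (2 * (T + m) <= N)%N -> (INR N / 2) ^ m <= INR ((N - T) ^_ m).
Proof.
move=> room; apply: Rle_trans (INR_leq (expn_sub_le_ffact _ _)); rewrite INR_expn.
apply: pow_incr; split; first by have := pos_INR N; lra.
have le_twice : (N <= 2 * (N - T - m))%N by lia.
by have := INR_leq le_twice; rewrite INR_muln /=; lra.
Qed.

End RealBounds.

Lemma leq_card_inj_factor (A B O : finType) (obs : A -> O) (Phi : B -> O) :
  injective obs -> (forall a, exists b, Phi b = obs a) -> #|A| <= #|B|.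
Proof.
move=> obs_inj obs_sub.
have ex_pre a : exists b, Phi b == obs a by have [b <-] := obs_sub a; exists b.
apply: (@leq_card _ _ (fun a => xchoose (ex_pre a))) => a a' eq_pre.
apply: obs_inj.
by rewrite -(eqP (xchooseP (ex_pre a))) -(eqP (xchooseP (ex_pre a'))) eq_pre.
Qed.

Notation inj_ffun A B := {f : {ffun A -> B} | injectiveb f}.

Lemma card_inj_ffun (A B : finType) : #|{: inj_ffun A B}| = #|B| ^_ #|A|.
Proof. by rewrite card_sig -card_inj_ffuns cardsE. Qed.

Fixpoint perm_of_pairs (T : finType) (s : seq (T * T)) : {perm T} :=
  if s is (a, b) :: s' then (perm_of_pairs s' * tperm (perm_of_pairs s' a) b)%g
  else 1%g.

Lemma perm_of_pairsE (T : finType) (s : seq (T * T)) :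
  {in s &, forall x y, (x.1 == y.1) = (x.2 == y.2)} ->
  {in s, forall x, perm_of_pairs s x.1 = x.2}.
Proof.
elim: s => [|[a b] s IH] //= s_inj [x y] /=.
have IHs := IH (sub_in2 (fun z zs => mem_behead zs) s_inj).
rewrite permM inE => /predU1P [[-> ->] | xys]; first exact: tpermL.
have xy : perm_of_pairs s x = y by apply: (IHs (x, y)).
have xy_ab : (x == a) = (y == b).
  by apply: (s_inj (x, y) (a, b)); rewrite inE ?xys ?eqxx ?orbT.
case: (eqVneq x a) xy_ab => [-> | x_neq_a] xy_ab.
  by move/esym/eqP: xy_ab => ->; exact: tpermL.
rewrite -xy tpermD ?(inj_eq perm_inj) 1?eq_sym //.
by rewrite xy -xy_ab.
Qed.

Definition words_upto (T : finType) (n : nat) : seq (seq T) :=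
  flatten [seq [seq val t | t <- enum {: j.-tuple T}] | j <- iota 0 n.+1].

Lemma mem_words_upto (T : finType) (n : nat) (w : seq T) :
  (w \in words_upto T n) = (size w <= n).
Proof.
apply/flatten_mapP/idP => [[j] | w_le].
  by rewrite mem_iota => /andP [_ j_le] /mapP [t _ ->]; rewrite size_tuple.
exists (size w); first by rewrite mem_iota.
by apply/mapP; exists (Tuple (eqxx (size w))); rewrite ?mem_enum.
Qed.

Section GlobalCount.

Variables (N R' K W D : nat) (F : model_class N R'.+1 K.+1 W D).
Hypothesis solvesF : solves_khop F.

Definition global_family (c : {ffun 'I_R' -> inj_ffun 'I_N 'I_N}) (r : 'I_R'.+1) :
  'I_N -> 'I_N :=
  if unlift ord0 r is Some i then val (c i) else idfun.

Lemma global_family_bij c r : bijective (global_family c r).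
Proof.
rewrite /global_family; case: (unlift ord0 r) => [i|]; last exact: inv_bij.
by apply/injF_bij/injectiveP; exact: (valP (c i)).
Qed.

Definition global_obs c : {ffun 'I_N * K.+1.-tuple 'I_R'.+1 -> 'I_N} :=
  [ffun x => khop (global_family c) x.1 x.2].

Lemma global_obs_inj : injective global_obs.
Proof.
move=> c1 c2 /ffunP eq_obs; apply/ffunP => i; apply/val_inj/ffunP => s.
move: (eq_obs (s, cons_tuple (lift ord0 i) (nseq_tuple K ord0))).
have id_walk c x n : foldl (fun x r => global_family c r x) x (nseq n ord0) = x.
  by elim: n x => //= n IH x; rewrite IH /global_family unlift_none.
by rewrite !ffunE /khop /= !id_walk /global_family liftK.
Qed.

Lemma global_count : (N`!) ^ R' <= 2 ^ (W + D * N + D * R'.+1).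
Proof.
pose model (b : bits W * {ffun 'I_N -> bits D} * {ffun 'I_R'.+1 -> bits D}) :=
  [ffun x : 'I_N * K.+1.-tuple 'I_R'.+1 => model_out F b.1.1 b.1.2 b.2 x.1 x.2].
have := @leq_card_inj_factor _ _ _ _ model global_obs_inj.
rewrite card_ffun card_inj_ffun !card_prod !card_ffun !card_tuple !card_ord card_bool.
rewrite ffactnn -!expnM -!expnD; apply=> c.
have [theta [Es [Er exact_out]]] := solvesF (global_family_bij c).
by exists (theta, Es, Er); apply/ffunP => x; rewrite !ffunE exact_out.
Qed.

End GlobalCount.

Section LocalCount.

Variables (N R' K W D p : nat) (F : model_class N R'.+1 K.+1 W D).
Hypothesis solvesF : solves_khop F.
Local Notation R := R'.+1.
Local Notation code := ('I_p * 'I_K.+1 * {ffun 'I_K -> 'I_R})%type.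
Local Notation T := (p * K.+1 * R ^ K).
Hypothesis tree_fits : T <= N.

Lemma card_code : #|{: code}| = T.
Proof. by rewrite !card_prod card_ffun !card_ord. Qed.

Lemma code_fits : #|{: code}| <= N.
Proof. by rewrite card_code. Qed.

Definition pad (w : seq 'I_R) : {ffun 'I_K -> 'I_R} := [ffun i : 'I_K => nth ord0 w i].

Lemma pad_inj (w w' : seq 'I_R) :
  size w <= K -> size w = size w' -> pad w = pad w' -> w = w'.
Proof.
move=> w_le eq_size /ffunP eq_pad; apply: (eq_from_nth (x0 := ord0) eq_size) => i i_lt.
by have := eq_pad (Ordinal (leq_trans i_lt w_le)); rewrite !ffunE.
Qed.

Definition node (s : 'I_p) (w : seq 'I_R) : 'I_N :=
  widen_ord code_fits (enum_rank (s, inord (size w), pad w)).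

Lemma node_lt s w : node s w < T.
Proof. by rewrite -card_code; exact: (ltn_ord (enum_rank _)). Qed.

Lemma node_inj s s' w w' :
  size w <= K -> size w' <= K -> node s w = node s' w' -> (s, w) = (s', w').
Proof.
move=> w_le w'_le /(congr1 val) /= /val_inj /enum_rank_inj [-> eq_size eq_pad].
have {}eq_size : size w = size w' by move/(congr1 val): eq_size; rewrite /= !inordK.
by rewrite (pad_inj w_le eq_size eq_pad).
Qed.

Local Notation u := (N - T).

Lemma leaf_subproof (i : 'I_u) : T + i < N.
Proof. have := ltn_ord i; lia. Qed.

Definition leaf (i : 'I_u) : 'I_N := Ordinal (leaf_subproof i).

Lemma leaf_inj : injective leaf.
Proof. by move=> i j /(congr1 val) /addnI /val_inj. Qed.

Lemma node_neq_leaf s w i : node s w != leaf i.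
Proof.
apply/eqP => /(congr1 val) eq_val.
by have := node_lt s w; rewrite eq_val /= ltnNge leq_addr.
Qed.

Local Notation leaf_key := ('I_p * {ffun 'I_K -> 'I_R})%type.

Section Hop.

Variables (c : inj_ffun leaf_key 'I_u) (r : 'I_R).

Definition next (s : 'I_p) (w : seq 'I_R) : 'I_N :=
  if size w < K then node s (rcons w r) else leaf (val c (s, pad w)).

Lemma next_inj s s' w w' :
  size w <= K -> size w' <= K -> next s w = next s' w' -> (s, w) = (s', w').
Proof.
rewrite /next => w_le w'_le.
have c_inj : injective (val c) by move: (valP c) => /injectiveP.
case: ltnP => w_lt; case: ltnP => w'_lt.
- by move/node_inj; rewrite !size_rcons => /(_ w_lt w'_lt) [-> /rcons_inj [->]].
- by move=> eq_next; have := node_neq_leaf s (rcons w r) (val c (s', pad w'));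
    rewrite eq_next eqxx.
- by move=> eq_next; have := node_neq_leaf s' (rcons w' r) (val c (s, pad w));
    rewrite -eq_next eqxx.
move/leaf_inj/c_inj => [-> eq_pad].
have eq_size : size w = size w'.
  by apply/anti_leq; rewrite (leq_trans w_le w'_lt) (leq_trans w'_le w_lt).
by rewrite (pad_inj w_le eq_size eq_pad).
Qed.

Definition hop_pairs : seq ('I_N * 'I_N) :=
  [seq (node s w, next s w) | s <- enum 'I_p, w <- words_upto 'I_R K].

Lemma hop_pairs_graph : {in hop_pairs &, forall x y, (x.1 == y.1) = (x.2 == y.2)}.
Proof.
move=> _ _ /allpairsP [[s w] [_ /= w_le ->]] /allpairsP [[s' w'] [_ /= w'_le ->]] /=.
rewrite !mem_words_upto in w_le w'_le.
by apply/eqP/eqP => [/node_inj | /next_inj] => /(_ w_le w'_le) [-> ->].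
Qed.

Definition hop : {perm 'I_N} := perm_of_pairs hop_pairs.

Lemma hop_node s w : size w <= K -> hop (node s w) = next s w.
Proof.
move=> w_le; apply: (perm_of_pairsE hop_pairs_graph (x := (node s w, next s w))).
by apply/allpairsP; exists (s, w); rewrite mem_enum mem_words_upto.
Qed.

End Hop.

Definition local_family (c : {ffun 'I_R -> inj_ffun leaf_key 'I_u}) (r : 'I_R) :
  'I_N -> 'I_N :=
  hop (c r) r.

Lemma local_family_walk c s w :
  size w <= K -> foldl (fun x r => local_family c r x) (node s [::]) w = node s w.
Proof.
elim/last_ind: w => [|w r IH] //; rewrite size_rcons => w_lt.
by rewrite foldl_rcons IH 1?ltnW // /local_family hop_node 1?ltnW // /next w_lt.
Qed.

Definition local_obs c : {ffun 'I_p * K.+1.-tuple 'I_R -> 'I_N} :=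
  [ffun x => khop (local_family c) (node x.1 [::]) x.2].

Lemma local_obs_inj : injective local_obs.
Proof.
move=> c1 c2 /ffunP eq_obs; apply/ffunP => r; apply/val_inj/ffunP => [[s f]].
have [t pad_t] : exists t : K.-tuple 'I_R, pad t = f.
  by exists (mktuple f); apply/ffunP => i; rewrite ffunE nth_mktuple.
move: (eq_obs (s, rcons_tuple t r)).
rewrite !ffunE /khop /= !foldl_rcons !local_family_walk ?size_tuple //.
rewrite /local_family !hop_node ?size_tuple // /next size_tuple ltnn pad_t.
exact: leaf_inj.
Qed.

Lemma local_count : (u ^_ (p * R ^ K)) ^ R <= 2 ^ (W + D * p + D * R).
Proof.
pose model (b : bits W * {ffun 'I_p -> bits D} * {ffun 'I_R -> bits D}) :=
  [ffun x : 'I_p * K.+1.-tuple 'I_R => F b.1.1 (b.1.2 x.1) b.2 (node x.1 [::]) x.2].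
have := @leq_card_inj_factor _ _ _ _ model local_obs_inj.
rewrite card_ffun card_inj_ffun !card_prod !card_ffun !card_tuple !card_ord card_bool.
rewrite -!expnM -!expnD; apply=> c.
have hop_bij r : bijective (local_family c r) by apply/injF_bij/perm_inj.
have [theta [Es [Er exact_out]]] := solvesF hop_bij.
exists (theta, [ffun s => Es (node s [::])], Er); apply/ffunP => x.
by rewrite !ffunE -exact_out.
Qed.

End LocalCount.

Lemma B_global_bound (N R' K W D : nat) (F : model_class N R'.+1 K.+1 W D) :
  solves_khop F -> (B_global N R'.+1 D - INR R'.+1 * INR D <= INR W)%R.
Proof.
move=> solvesF; have W_ge0 := pos_INR W; have D_ge0 := pos_INR D.
have R_ge0 := pos_INR R'; rewrite /B_global S_INR.
case: (posnP N) => [-> | N_gt0]; first by rewrite /= !Rmult_0_r !Rmult_0_l; nra.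
have x_gt0 : (0 < INR N / exp 1)%R.
  by apply: Rdiv_lt_0_compat; [apply: lt_0_INR; lia | exact: exp_pos].
have := le_log2_of_expn_le x_gt0 (pow_div_e_le_fact N) (global_count solvesF).
rewrite INR_muln !INR_addn !INR_muln S_INR; nra.
Qed.

Lemma p_local_fits (N R k : nat) : p_local N R k * (2 * R ^ (2 * k)) <= N.
Proof.
rewrite /p_local (_ : Nat.pow R (2 * k) = R ^ (2 * k)) ?leq_divM //.
by elim: (2 * k) => //= n ->; rewrite expnS.
Qed.

Lemma p_local_room (N R K : nat) : 1 < R ->
  2 * (p_local N R K.+1 * K.+1 * R ^ K + p_local N R K.+1 * R ^ K) <= N.
Proof.
move=> R_gt1; have := p_local_fits N R K.+1; set p := p_local _ _ _.
have : K.+2 < R ^ K.+2 by apply: ltn_expl.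
rewrite (_ : 2 * K.+1 = K + K.+2) ?expnD; last lia.
by move: (R ^ K) (R ^ K.+2) => a b; nia.
Qed.

Lemma B_local_bound (N R' K W D : nat) (F : model_class N R'.+2 K.+1 W D) :
  solves_khop F -> (B_local N R'.+2 K.+1 D - INR R'.+2 * INR D <= INR W)%R.
Proof.
move=> solvesF; have W_ge0 := pos_INR W; have D_ge0 := pos_INR D.
rewrite /B_local; set p := p_local N R'.+2 K.+1; set R := R'.+2.
case: (posnP p) => [-> | p_gt0]; first by rewrite Rmult_0_l; have := pos_INR R; nra.
have room : 2 * (p * K.+1 * R ^ K + p * R ^ K) <= N by apply: p_local_room.
have tree_fits : p * K.+1 * R ^ K <= N by lia.
have N_gt0 : (0 < INR N)%R by apply: lt_0_INR; move: room p_gt0; nia.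
have N_half_gt0 : (0 < INR N / 2)%R by lra.
have := le_log2_of_expn_le N_half_gt0 (half_pow_le_ffact room)
  (local_count solvesF tree_fits).
rewrite log2_half // !INR_muln !INR_addn !INR_muln INR_expn -/R -tech_pow_Rmult.
set X := log2 _; set Y := (INR R ^ K)%R; nra.
Qed.

Theorem theorem2 (N NR k W D : nat) (F : model_class N NR k W D) :
  (2 <= NR)%N -> (2 <= k)%N -> solves_khop F ->
  (INR W >= Rmax (B_global N NR D) (B_local N NR k D) - INR NR * INR D)%R.
Proof.
case: NR F => [|[|R']] // F _; case: k F => [|K] // F _ solvesF.
have := B_global_bound solvesF; have := B_local_bound solvesF.
by rewrite /Rmax; case: Rle_dec; lra.
Qed.
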